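(* Let $p$ be a prime, $k\ge 1$, and let $M,H$ be invertible $k\times k$ matrices over $\mathbb{F}_p$. Let $m,n$ be positive integers and define \[A=\sum_{i=0}^{m-1} H^iMH^i,\qquad B=\sum_{i=0}^{n-1} H^iMH^i,\qquad K=\sum_{i=0}^{m+n-1} H^iMH^i.\] Suppose $R$ and $S$ are $k\times k$ matrices over $\mathbb{F}_p$ which commute with $H$ and satisfy \[RMS = HAH + M - A.\] Then $RBS + A = K$.
   Context: This arises from the MAKE key exchange protocol over the semidirect product of the additive semigroup and multiplicative semigroup of $k\times k$ matrices over $\mathbb{F}_p$, with product $(G_1,H_1)\cdot(G_2,H_2)=(H_2G_1H_2+G_2,H_1H_2)$. In it, $A$ and $B$ are the first components of $(M,H)^m$ and $(M,H)^n$ (Alice's and Bob's public keys), and $K$ is the shared secret key $H^mBH^m+A=H^nAH^n+B$. *)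

From mathcomp Require Import all_boot all_order all_algebra.
Set Implicit Arguments. Unset Strict Implicit. Unset Printing Implicit Defensive.
Import GRing.Theory.
Local Open Scope ring_scope.

Definition make_sum (R : pzRingType) (n : nat) (M H : 'M[R]_n.+1) (t : nat) : 'M[R]_n.+1 :=
  \sum_(i < t) H ^+ i * M * H ^+ i.

From mathcomp Require Import all_boot all_order all_algebra.
Import GRing.Theory.
Local Open Scope ring_scope.

(* The partial sums K_t telescope: H K_t H + M - K_t = H^t M H^t, so the
   hypothesis says R M S = H^m M H^m.  Since R and S commute with H, R B S is
   the n-term sum built from R M S = H^m M H^m in place of M, i.e. the terms of
   K with indices m, ..., m+n-1.  The identity holds over any ring. *)

Section MakeSum.

Variables (R : pzRingType) (k : nat) (H : 'M[R]_k.+1).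

Lemma make_sumSr (M : 'M[R]_k.+1) t :
  make_sum M H t.+1 = make_sum M H t + H ^+ t * M * H ^+ t.
Proof. by rewrite /make_sum big_ord_recr. Qed.

Lemma make_sumSl (M : 'M[R]_k.+1) t :
  make_sum M H t.+1 = M + H * make_sum M H t * H.
Proof.
rewrite /make_sum big_ord_recl /= expr0 mul1r mulr1 mulr_sumr mulr_suml.
congr (_ + _); apply: eq_bigr => i _.
by rewrite /bump /= add1n {1}exprS exprSr !mulrA.
Qed.

Lemma make_sum_telescope (M : 'M[R]_k.+1) t :
  H * make_sum M H t * H + M - make_sum M H t = H ^+ t * M * H ^+ t.
Proof.
have := make_sumSl M t; rewrite make_sumSr => step.
by rewrite [_ + M]addrC -step addrC addKr.
Qed.

Lemma make_sumD (M : 'M[R]_k.+1) m n :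
  make_sum M H (m + n) = make_sum M H m + make_sum (H ^+ m * M * H ^+ m) H n.
Proof.
rewrite /make_sum big_split_ord /=; congr (_ + _).
by apply: eq_bigr => i _; rewrite !mulrA -exprD -!mulrA -exprD (addnC i m).
Qed.

Lemma make_sum_conj (A B M : 'M[R]_k.+1) t :
  GRing.comm A H -> GRing.comm B H ->
  A * make_sum M H t * B = make_sum (A * M * B) H t.
Proof.
move=> cAH cBH; rewrite /make_sum mulr_sumr mulr_suml.
apply: eq_bigr => i _.
have cAHi : GRing.comm A (H ^+ i) by apply: commrX.
have cBHi : GRing.comm B (H ^+ i) by apply: commrX.
by rewrite !mulrA cAHi -(mulrA _ (H ^+ i) B) -cBHi !mulrA.
Qed.

End MakeSum.

Theorem lemma3p1 (p : nat) (hp : prime p) (k' : nat)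
  (M H R S : 'M['F_p]_k'.+1)
  (hM : M \in unitmx) (hH : H \in unitmx)
  (m n : nat) (hm : (0 < m)%N) (hn : (0 < n)%N)
  (hRH : R * H = H * R) (hSH : S * H = H * S)
  (hRMS : R * M * S = H * make_sum M H m * H + M - make_sum M H m) :
  R * make_sum M H n * S + make_sum M H m = make_sum M H (m + n).
Proof.
rewrite make_sum_telescope in hRMS.
by rewrite make_sum_conj // hRMS make_sumD addrC.
Qed.
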